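(* Let $G$ be a finite subgroup of $O(d)$ and $p\ge1$ an integer such that every $G$-invariant homogeneous polynomial of degree $2p$ on $\mathbb{R}^d$ is a scalar multiple of $|x|^{2p}$. Then there is a homogeneous symmetric polynomial $F_p$ of degree $p$ in $d$ variables such that for every real symmetric $d\times d$ matrix $M$ and every $y\in\mathbb{R}^d$, $$\frac{1}{|G|}\sum_{U\in G}\langle M,P_{Uy}\rangle_{HS}^p=F_p(\sigma(M))\,|P_y|_{HS}^p=F_p(\sigma(M))\,|y|^{2p},$$ where $\sigma(M)$ is the multiset of eigenvalues of $M$ (with multiplicity).
   Context: For $y\in\mathbb{R}^d$, $P_y=yy^\dagger$ ($\dagger$ = transpose). $\langle A,B\rangle_{HS}=\operatorname{tr}(A^\dagger B)$ is the Hilbert–Schmidt inner product and $|A|_{HS}=\langle A,A\rangle_{HS}^{1/2}$. *)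

From HB Require Import structures.
From mathcomp Require Import all_boot all_order all_algebra.
From mathcomp Require Import mpoly.
Set Implicit Arguments. Unset Strict Implicit. Unset Printing Implicit Defensive.
Import Order.TTheory GRing.Theory Num.Theory.
Local Open Scope ring_scope.

Definition finite_subgroup_O (R : rcfType) (d : nat) (G : seq 'M[R]_d) : Prop :=
  [/\ uniq G, 1%:M \in G,
      (forall U V, U \in G -> V \in G -> U *m V \in G),
      (forall U, U \in G -> invmx U \in G)
    & (forall U, U \in G -> U *m U^T = 1%:M)].

Definition peval (R : rcfType) (d : nat) (q : {mpoly R[d]}) (x : 'cV[R]_d) : R :=
  q.@[fun i => x i 0].

Definition sqnorm_poly (R : rcfType) (d : nat) : {mpoly R[d]} :=
  \sum_(i < d) 'X_i ^+ 2.

Definition sqnorm (R : rcfType) (d : nat) (y : 'cV[R]_d) : R :=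
  \sum_(i < d) y i 0 ^+ 2.

Definition Pproj (R : rcfType) (d : nat) (y : 'cV[R]_d) : 'M[R]_d := y *m y^T.

Definition hs_inner (R : rcfType) (d : nat) (A B : 'M[R]_d) : R := \tr (A^T *m B).
Definition hs_norm (R : rcfType) (d : nat) (A : 'M[R]_d) : R := Num.sqrt (hs_inner A A).

Definition eigen_multiset (R : rcfType) (d : nat) (M : 'M[R]_d) (s : 'I_d -> R) : Prop :=
  char_poly M = \prod_(i < d) ('X - (s i)%:P).

(* Let q(x) be the average over U in G of (x^T U^T M U x)^p.  It is a G-invariant
   form of degree 2p, so by hypothesis q = c |x|^(2p).  The p-th power of the
   Laplacian maps both sides to constants: Delta^p |x|^(2p) is a positive
   constant, and Delta^p (x^T N x)^p is a universal polynomial in the traces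
   tr N^k, which for N = U^T M U are the power sums of the eigenvalues of M.
   Hence c is the value at sigma(M) of a fixed symmetric form of degree p. *)

From HB Require Import structures.
From mathcomp Require Import all_boot all_order all_algebra.
From mathcomp Require Import ring perm complex mpoly.
Set Implicit Arguments. Unset Strict Implicit. Unset Printing Implicit Defensive.
Import Order.TTheory GRing.Theory Num.Theory.
Local Open Scope ring_scope.

Section TriangularPowers.
Variables (R : comNzRingType) (n : nat).
Implicit Types A B : 'M[R]_n.

Lemma is_trig_mxM A B : is_trig_mx A -> is_trig_mx B -> is_trig_mx (A *m B).
Proof.
move=> /is_trig_mxP trigA /is_trig_mxP trigB; apply/is_trig_mxP => i j lt_ij.
rewrite mxE big1 // => k _; have [lt_ik|le_ki] := ltnP i k; first by rewrite trigA ?mul0r.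
by rewrite trigB ?mulr0 // (leq_ltn_trans le_ki lt_ij).
Qed.

Lemma trig_mulmx_diag A B i : is_trig_mx A -> is_trig_mx B ->
  (A *m B) i i = A i i * B i i.
Proof.
move=> /is_trig_mxP trigA /is_trig_mxP trigB.
rewrite mxE (bigD1 i) //= big1 ?addr0 // => k nki.
have [lt_ik|lt_ki|eq_ik] := ltngtP i k; first by rewrite trigA ?mul0r.
  by rewrite trigB ?mulr0.
by move: nki; rewrite (val_inj eq_ik) eqxx.
Qed.

Lemma is_trig_mxX A k : is_trig_mx A -> is_trig_mx (A ^+ k).
Proof.
move=> trigA; elim: k => [|k IHk]; first exact: scalar_mx_is_trig.
by rewrite exprSr; apply: is_trig_mxM.
Qed.

Lemma trig_mxX_diag A k i : is_trig_mx A -> (A ^+ k) i i = A i i ^+ k.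
Proof.
move=> trigA; elim: k => [|k IHk]; first by rewrite !expr0 mxE eqxx.
by rewrite !exprSr -[_ * A]/(_ *m A) trig_mulmx_diag ?IHk ?is_trig_mxX.
Qed.

End TriangularPowers.

Lemma map_mxX (R R' : comNzRingType) (f : {rmorphism R -> R'}) n (A : 'M[R]_n) k :
  map_mx f (A ^+ k) = map_mx f A ^+ k.
Proof.
elim: k => [|k IHk]; first by rewrite !expr0 map_mx1.
by rewrite !exprS -[_ * _]/(_ *m _) map_mxM IHk.
Qed.

Section Similarity.
Variables (F : fieldType) (n : nat) (P : 'M[F]_n).
Hypothesis unitP : P \in unitmx.

Lemma char_poly_conj A : char_poly (P *m A *m invmx P) = char_poly A.
Proof.
rewrite /char_poly /char_poly_mx.
set Pp := map_mx polyC P; set Ip := map_mx polyC (invmx P).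
have PI : Pp *m Ip = 1%:M by rewrite -map_mxM mulmxV // map_mx1.
have IP : Ip *m Pp = 1%:M by rewrite -map_mxM mulVmx // map_mx1.
have -> : 'X%:M - map_mx polyC (P *m A *m invmx P) = Pp *m ('X%:M - map_mx polyC A) *m Ip.
  by rewrite !map_mxM mulmxBr mulmxBl scalar_mxC -(mulmxA _ Pp) PI mulmx1.
by rewrite !det_mulmx mulrC mulrA -det_mulmx IP det1 mul1r.
Qed.

Lemma conjmxX A k : (P *m A *m invmx P) ^+ k = P *m A ^+ k *m invmx P.
Proof.
elim: k => [|k IHk]; first by rewrite !expr0 mulmx1 mulmxV.
rewrite exprSr IHk -[_ * _]/(_ *m _) !mulmxA mulmxKV //.
by rewrite exprSr -[A ^+ k * A]/(_ *m _) !mulmxA.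
Qed.

End Similarity.

Lemma mxtraceX_char_roots (C : numClosedFieldType) n (A : 'M[C]_n) (t : 'I_n -> C) k :
  char_poly A = \prod_i ('X - (t i)%:P) -> \tr (A ^+ k) = \sum_i t i ^+ k.
Proof.
case: n A t => [|n] A t charA; first by rewrite /mxtrace !big_ord0.
have [P unitaryP] := Schur A (ltn0Sn n); have unitP := unitarymx_unit unitaryP.
rewrite /similar_to conjumx // => trigT; set T := P *m A *m invmx P in trigT.
have charT : char_poly T = \prod_i ('X - (T i i)%:P) by rewrite char_poly_trig.
rewrite /T char_poly_conj // charA in charT.
have eq_diag : perm_eq [seq t i | i <- enum 'I_n.+1] [seq T i i | i <- enum 'I_n.+1].
  by apply: prod_XsubC_eq; rewrite !big_map.
have -> : \tr (A ^+ k) = \tr (T ^+ k) by rewrite /T conjmxX // mxtrace_mulC mulKmx.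
rewrite /mxtrace (eq_bigr _ (fun i _ => trig_mxX_diag k i trigT)).
have sum_map (f : 'I_n.+1 -> C) : \sum_i f i ^+ k = \sum_(x <- [seq f i | i <- enum 'I_n.+1]) x ^+ k.
  by rewrite big_map enumT.
by rewrite !sum_map (perm_big _ eq_diag).
Qed.

Lemma mxtraceX_real_char_roots (R : rcfType) n (A : 'M[R]_n) (t : 'I_n -> R) k :
  char_poly A = \prod_i ('X - (t i)%:P) -> \tr (A ^+ k) = \sum_i t i ^+ k.
Proof.
move=> charA; pose f := real_complex R; apply: (@complexI R).
have charfA : char_poly (map_mx f A) = \prod_i ('X - (f (t i))%:P).
  rewrite -map_char_poly charA rmorph_prod /=.
  by apply: eq_bigr => i _; rewrite map_polyXsubC.
rewrite -trace_map_mx map_mxX (mxtraceX_char_roots k charfA) rmorph_sum.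
by apply: eq_bigr => i _; rewrite rmorphXn.
Qed.

Lemma mxtrace_orthogonal_conjX (R : comNzRingType) n (U M : 'M[R]_n) k :
  U *m U^T = 1%:M -> \tr ((U^T *m M *m U) ^+ k) = \tr (M ^+ k).
Proof.
move=> orthoU; have conjX : (U^T *m M *m U) ^+ k = U^T *m M ^+ k *m U.
  elim: k => [|k IHk]; first by rewrite !expr0 mulmx1 mulmx1C.
  by rewrite !exprSr IHk -![_ * _]/(_ *m _) !mulmxA -(mulmxA _ U) orthoU mulmx1.
by rewrite conjX mxtrace_mulC mulmxA orthoU mul1mx.
Qed.

Lemma trmxX (R : comNzRingType) n (A : 'M[R]_n) k : (A ^+ k)^T = A^T ^+ k.
Proof.
elim: k => [|k IHk]; first by rewrite !expr0 trmx1.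
by rewrite exprS -[A * _]/(A *m A ^+ k) trmx_mul IHk exprSr.
Qed.

Section Laplacian.
Variables (R : comNzRingType) (d : nat).
Local Notation MP := {mpoly R[d]}.
Implicit Types (p q r : MP) (A B : 'M[R]_d).

Lemma mderivXU (i j : 'I_d) : ('X_j : MP)^`M(i) = (j == i)%:R.
Proof.
rewrite mderivX mnm1E; have [->|_] := eqVneq j i; last by rewrite scale0r.
by rewrite -{1}[U_(i)%MM]add0m addmK mpolyX0 scale1r.
Qed.

Definition mlaplacian p : MP := \sum_(i < d) p^`M(i)^`M(i).

Fact mlaplacian_is_linear : linear mlaplacian.
Proof.
move=> c p q; rewrite /mlaplacian scaler_sumr -big_split /=.
by apply: eq_bigr => i _; rewrite !linearP.
Qed.

HB.instance Definition _ := GRing.isLinear.Build R MP MP _ mlaplacian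
  mlaplacian_is_linear.

Definition iter_mlaplacian n : MP -> MP := iter n mlaplacian.

Fact iter_mlaplacian_is_linear n : linear (iter_mlaplacian n).
Proof. by elim: n => [|n IHn] c p q //=; rewrite IHn linearP. Qed.

HB.instance Definition _ n := GRing.isLinear.Build R MP MP _ (iter_mlaplacian n)
  (iter_mlaplacian_is_linear n).

Definition mgrad_dot p q : MP := \sum_(i < d) p^`M(i) * q^`M(i).

Lemma mgrad_dotMr p q r : mgrad_dot p (q * r) = mgrad_dot p q * r + q * mgrad_dot p r.
Proof.
rewrite /mgrad_dot mulr_suml mulr_sumr -big_split /=; apply: eq_bigr => i _.
by rewrite mderivM; ring.
Qed.

Lemma mlaplacianM p q :
  mlaplacian (p * q) = p * mlaplacian q + q * mlaplacian p + mgrad_dot p q *+ 2.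
Proof.
rewrite /mlaplacian /mgrad_dot !mulr_sumr -sumrMnl -!big_split /=.
by apply: eq_bigr => i _; rewrite !mderivM !mderivD !mderivM mulr2n; ring.
Qed.

Definition qform A : MP := \sum_i \sum_j A i j *: ('X_i * 'X_j).

Lemma qform_homog A : qform A \is 2.-homog.
Proof.
have hX (k : 'I_d) : ('X_k : MP) \is 1.-homog by rewrite dhomogX /= mdeg1.
by apply: rpred_sum => i _; apply: rpred_sum => j _; rewrite rpredZ ?(dhomogM (hX i) (hX j)).
Qed.

Lemma mderiv_qform A k : (qform A)^`M(k) = \sum_j (A k j + A j k) *: 'X_j.
Proof.
have deriv_row i : (\sum_j A i j *: ('X_i * 'X_j) : MP)^`M(k) =
    (if i == k then \sum_j A k j *: 'X_j else 0) + A i k *: 'X_i.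
  rewrite linear_sum /=.
  under eq_bigr => j _ do rewrite mderivZ mderivM !mderivXU scalerDr.
  rewrite big_split /=; congr (_ + _).
    have [->|_] := eqVneq i k; first by apply: eq_bigr => j _; rewrite mul1r.
    by rewrite big1 // => j _; rewrite mul0r scaler0.
  rewrite (bigD1 k) //= eqxx mulr1 big1 ?addr0 // => j /negbTE ->.
  by rewrite mulr0 scaler0.
rewrite linear_sum (eq_bigr _ (fun i _ => deriv_row i)) big_split /=.
rewrite -big_mkcond /= big_pred1_eq -big_split /=.
by apply: eq_bigr => j _; rewrite scalerDl.
Qed.

Lemma mlaplacian_qform A : mlaplacian (qform A) = (\tr A *+ 2)%:A.
Proof.
rewrite /mlaplacian /mxtrace -sumrMnl scaler_suml; apply: eq_bigr => k _.
rewrite mderiv_qform linear_sum /=.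
under eq_bigr => j _ do rewrite mderivZ mderivXU.
rewrite (bigD1 k) //= eqxx big1 ?addr0; first by rewrite mulr2n.
by move=> j /negbTE ->; rewrite scaler0.
Qed.

Lemma mgrad_dot_qform A B : A^T = A -> B^T = B ->
  mgrad_dot (qform A) (qform B) = 4%:R *: qform (A *m B).
Proof.
move=> sA sB; have eA i j : A i j = A j i by rewrite -{1}sA mxE.
have eB i j : B i j = B j i by rewrite -{1}sB mxE.
rewrite /mgrad_dot /qform scaler_sumr.
under eq_bigr => k _ do rewrite !mderiv_qform mulr_suml.
under [RHS]eq_bigr => j _ do rewrite scaler_sumr.
rewrite exchange_big /=; apply: eq_bigr => j _.
under eq_bigr => k _ do rewrite mulr_sumr.
rewrite exchange_big /=; apply: eq_bigr => l _.
rewrite !mxE scaler_suml scaler_sumr; apply: eq_bigr => k _.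
rewrite -scalerAl -scalerAr scalerA -(eA j k) (eB l k) scalerA.
by congr (_ *: _); rewrite -!mulr2n; ring.
Qed.

End Laplacian.

Fixpoint merges (a : nat) (L : seq nat) : seq (seq nat) :=
  if L is b :: L' then ((a + b)%N :: L') :: map (cons b) (merges a L') else [::].

Lemma size_merges a L L' : L' \in merges a L -> size L' = size L.
Proof.
elim: L L' => [|b L IHL] L' //=; rewrite in_cons => /predU1P[-> //|/mapP[L'' /IHL eqL ->]].
by rewrite /= eqL.
Qed.

Lemma sumn_merges a L L' : L' \in merges a L -> sumn L' = (a + sumn L)%N.
Proof.
elim: L L' => [|b L IHL] L' //=; rewrite in_cons.
case/predU1P=> [->|/mapP[L'' /IHL eqL ->]] /=; first by rewrite addnA.
by rewrite eqL addnCA.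
Qed.

Section LaplacianConstant.
Variable K : comNzRingType.
Implicit Types (T : nat -> K) (L : seq nat).

(* With [T k = tr M^k] and q_k := x^T M^k x, the product rule
   Delta (q_a P) = q_a Delta P + P Delta q_a + 2 grad q_a . grad P, together with
   Delta q_a = 2 tr M^a and grad q_a . grad q_b = 4 q_(a+b), writes the Laplacian of
   q_a * prod_(k in L') q_k as the combination [lap_terms T (a :: L')] of products
   over lists of length [size L'].  Iterating, [lap_const n T L] is the constant
   Delta^n prod_(k in L) q_k when [size L = n]. *)
Fixpoint lap_terms T L : seq (K * seq nat) :=
  if L is a :: L' then
    [seq (c.1, a :: c.2) | c <- lap_terms T L'] ++
    (T a *+ 2, L') :: [seq (8%:R, L'') | L'' <- merges a L']
  else [::].

Fixpoint lap_const n T L : K :=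
  if n is n'.+1 then \sum_(c <- lap_terms T L) c.1 * lap_const n' T c.2
  else if L is [::] then 1 else 0.

Lemma size_lap_terms T L c : c \in lap_terms T L -> (size c.2).+1 = size L.
Proof.
elim: L c => [|a L IHL] c //=; rewrite mem_cat in_cons.
case/orP=> [/mapP[c' /IHL eqL ->]|/predU1P[-> //|/mapP[L' /size_merges eqL ->]]] /=.
  by rewrite eqL.
by rewrite eqL.
Qed.

Lemma eq_lap_const n T T' L : T =1 T' -> lap_const n T L = lap_const n T' L.
Proof.
move=> eqT; have eq_terms L' : lap_terms T L' = lap_terms T' L'.
  by elim: L' => //= a L' ->; rewrite eqT.
elim: n L => //= n IHn L; rewrite eq_terms.
by apply: eq_bigr => c _; rewrite IHn.
Qed.

Lemma lap_const_closed (S : semiringClosed K) n T L :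
  (forall a, T a \in S) -> lap_const n T L \in S.
Proof.
move=> TS; have coefS L' c : c \in lap_terms T L' -> c.1 \in S.
  elim: L' c => [|a L' IHL] c //=; rewrite mem_cat in_cons.
  case/orP=> [/mapP[c' /IHL ? ->]|/predU1P[->|/mapP[L'' _ ->]]] //=.
    exact: rpredMn.
  exact: rpred_nat.
elim: n L => [|n IHn] L /=; first by case: L => [|? ?]; rewrite ?rpred1 ?rpred0.
by rewrite big_seq rpred_sum // => c /coefS cS; rewrite rpredM.
Qed.

End LaplacianConstant.

Lemma rmorph_lap_const (K K' : comNzRingType) (f : {rmorphism K -> K'}) n T L :
  f (lap_const n T L) = lap_const n (f \o T) L.
Proof.
have map_terms L' : [seq (f c.1, c.2) | c <- lap_terms T L'] = lap_terms (f \o T) L'.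
  elim: L' => //= a L' IHL; rewrite map_cat /= -IHL -!map_comp rmorphMn.
  by congr (_ ++ _ :: _); apply: eq_map => L'' /=; rewrite rmorph_nat.
elim: n L => [|n IHn] L /=; first by case: L => [|? ?]; rewrite ?rmorph1 ?rmorph0.
rewrite rmorph_sum -map_terms big_map; apply: eq_bigr => c _ /=.
by rewrite rmorphM IHn.
Qed.

Lemma lap_const_gt0 (K : numDomainType) n (T : nat -> K) L :
  (forall a, 0 < T a) -> size L = n -> 0 < lap_const n T L.
Proof.
move=> Tgt0; have coef_gt0 L' c : c \in lap_terms T L' -> 0 < c.1.
  elim: L' c => [|a L' IHL] c //=; rewrite mem_cat in_cons.
  case/orP=> [/mapP[c' /IHL ? ->]|/predU1P[->|/mapP[L'' _ ->]]] //=.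
    by rewrite pmulrn_lgt0.
elim: n L => [|n IHn] [|a L] //= [sizeL].
set r := lap_terms T (a :: L).
have term_gt0 c : c \in r -> 0 < c.1 * lap_const n T c.2.
  move=> cr; rewrite mulr_gt0 ?(coef_gt0 _ _ cr) // IHn //.
  by apply/eqP; rewrite -eqSS (size_lap_terms cr) /= sizeL.
have middle_r : (T a *+ 2, L) \in r by rewrite mem_cat mem_head orbT.
rewrite big_seq lt_def psumr_neq0 => [|c /term_gt0/ltW //].
rewrite sumr_ge0 ?andbT => [|c /term_gt0/ltW //].
by apply/hasP; exists (T a *+ 2, L); rewrite ?middle_r ?term_gt0.
Qed.

Lemma lap_const_homog (R : comNzRingType) (d n : nat) (T : nat -> {mpoly R[d]}) L :
  (forall k, T k \is k.-homog) -> lap_const n T L \is (sumn L).-homog.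
Proof.
move=> Thomog.
have coef_homog L' c : c \in lap_terms T L' ->
    exists2 k, sumn L' = (k + sumn c.2)%N & c.1 \is k.-homog.
  elim: L' c => [|a L' IHL] c //=; rewrite mem_cat in_cons.
  case/orP=> [/mapP[c' /IHL[k eqk hk] ->]|/predU1P[->|/mapP[L'' /sumn_merges eqL ->]]] /=.
  - by exists k; rewrite // eqk addnCA.
  - by exists a; rewrite ?rpredMn.
  - by exists 0%N; rewrite ?eqL // rpredMn ?dhomog1.
elim: n L => [|n IHn] L /=; first by case: L => [|? ?]; rewrite ?dhomog1 ?dhomog0.
rewrite big_seq rpred_sum // => c /coef_homog[k -> hk].
exact: dhomogM hk (IHn _).
Qed.

Section QformProducts.
Variables (R : comNzRingType) (d : nat) (M : 'M[R]_d).
Hypothesis symM : M^T = M.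
Local Notation MP := {mpoly R[d]}.
Local Notation trX k := (\tr (M ^+ k)).

Definition qform_prod L : MP := \prod_(k <- L) qform (M ^+ k).

Definition qform_comb (cs : seq (R * seq nat)) : MP := \sum_(c <- cs) c.1 *: qform_prod c.2.

Lemma symmetric_mxX k : (M ^+ k)^T = M ^+ k.
Proof. by rewrite trmxX symM. Qed.

Lemma qform_prod_cons k L : qform_prod (k :: L) = qform (M ^+ k) * qform_prod L.
Proof. exact: big_cons. Qed.

Lemma mgrad_dot_qform_prod k L :
  mgrad_dot (qform (M ^+ k)) (qform_prod L) = 4%:R *: \sum_(L' <- merges k L) qform_prod L'.
Proof.
elim: L => [|l L IHL] /=.
  rewrite /qform_prod !big_nil scaler0 /mgrad_dot big1 // => i _.
  by rewrite mderivC mulr0.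
rewrite qform_prod_cons mgrad_dotMr IHL mgrad_dot_qform ?symmetric_mxX //.
rewrite -[_ *m _]/(M ^+ k * M ^+ l) -exprD big_cons big_map qform_prod_cons.
rewrite scalerDr -scalerAl -scalerAr mulr_sumr; congr (_ + _ *: _).
by apply: eq_bigr => L' _; rewrite qform_prod_cons.
Qed.

Lemma mlaplacian_qform_prod L :
  mlaplacian (qform_prod L) = qform_comb (lap_terms (fun k => trX k) L).
Proof.
elim: L => [|k L IHL].
  by rewrite /qform_prod /qform_comb !big_nil /mlaplacian big1 // => i _; rewrite mderivC mderiv0.
rewrite qform_prod_cons mlaplacianM IHL mgrad_dot_qform_prod mlaplacian_qform.
rewrite /qform_comb /= big_cat big_cons !big_map /= -addrA; congr (_ + _).
  by rewrite mulr_sumr; apply: eq_bigr => c _; rewrite qform_prod_cons -scalerAr.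
rewrite mulrC -scalerAl mul1r; congr (_ + _).
by rewrite -scaler_sumr -scaler_nat scalerA -natrM.
Qed.

Lemma iter_mlaplacian_qform_prod n L : size L = n ->
  iter_mlaplacian n (qform_prod L) = (lap_const n (fun k => trX k) L)%:A.
Proof.
elim: n L => [|n IHn] [|k L] //; first by rewrite /= /qform_prod big_nil scale1r.
move=> [sizeL]; rewrite /iter_mlaplacian iterSr -/(iter_mlaplacian n) /=.
rewrite mlaplacian_qform_prod linear_sum scaler_suml big_seq [RHS]big_seq.
apply: eq_bigr => c cin; rewrite linearZZ /= IHn ?scalerA //.
by apply/eqP; rewrite -eqSS (size_lap_terms cin) /= sizeL.
Qed.

Lemma iter_mlaplacian_qformX p :
  iter_mlaplacian p (qform M ^+ p) = (lap_const p (fun k => trX k) (nseq p 1%N))%:A.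
Proof.
rewrite -iter_mlaplacian_qform_prod ?size_nseq //; congr (iter_mlaplacian p _).
rewrite /qform_prod big_nseq expr1.
by elim: p => [|p IHp] /=; rewrite ?expr0 // -IHp exprS.
Qed.

End QformProducts.

Section PowerSums.
Variables (R : comNzRingType) (d : nat).

Definition power_sum k : {mpoly R[d]} := \sum_(i < d) 'X_i ^+ k.

Lemma power_sum_homog k : power_sum k \is k.-homog.
Proof.
apply: rpred_sum => i _.
have homogX : ('X_i : {mpoly R[d]}) \is 1.-homog by rewrite dhomogX /= mdeg1.
by have := dhomogMn k homogX; rewrite mul1n.
Qed.

Lemma msymXU (s : {perm 'I_d}) (i : 'I_d) : msym s ('X_i : {mpoly R[d]}) = 'X_(s i).
Proof.
rewrite msymX; congr ('X_[_]); apply/mnmP => j.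
rewrite mnmE /= !mnm1E; congr (nat_of_bool _).
by apply/eqP/eqP => [->|<-]; rewrite ?permKV ?permK.
Qed.

Lemma power_sum_sym k : power_sum k \is symmetric.
Proof.
apply/issymP => s; rewrite raddf_sum /=.
under eq_bigr => i _ do rewrite rmorphXn /= msymXU.
by rewrite [RHS](reindex_inj (@perm_inj _ s)).
Qed.

End PowerSums.

Section Quadratic.
Variables (R : rcfType) (d : nat).
Implicit Types (M N : 'M[R]_d) (x y : 'cV[R]_d).

Lemma peval_qform N x : peval (qform N) x = (x^T *m N *m x) 0 0.
Proof.
rewrite /peval /qform rmorph_sum mxE /=; under eq_bigr => i _ do rewrite rmorph_sum /=.
rewrite exchange_big /=; apply: eq_bigr => j _; rewrite mxE mulr_suml.
by apply: eq_bigr => i _; rewrite mevalZ mevalM !mevalXU !mxE; ring.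
Qed.

Lemma peval_sqnorm_poly x : peval (sqnorm_poly R d) x = sqnorm x.
Proof.
rewrite /peval /sqnorm_poly /sqnorm rmorph_sum; apply: eq_bigr => i _.
by rewrite rmorphXn /= mevalXU.
Qed.

Lemma sqnorm_poly_qform : sqnorm_poly R d = qform 1%:M.
Proof.
apply: eq_bigr => i _; rewrite (bigD1 i) //= big1 ?addr0.
  by rewrite mxE eqxx scale1r expr2.
by move=> j /negbTE nij; rewrite mxE eq_sym nij scale0r.
Qed.

Lemma hs_inner_Pproj M x : M^T = M -> hs_inner M (Pproj x) = (x^T *m M *m x) 0 0.
Proof.
by move=> symM; rewrite /hs_inner /Pproj symM mulmxA mxtrace_mulC trace_mx11 mulmxA.
Qed.

Lemma hs_norm_Pproj y : hs_norm (Pproj y) = sqnorm y.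
Proof.
have sqnormE : (y^T *m y) 0 0 = sqnorm y.
  by rewrite mxE; apply: eq_bigr => i _; rewrite mxE expr2.
rewrite /hs_norm /hs_inner /Pproj trmx_mul trmxK -mulmxA mxtrace_mulC !mulmxA.
rewrite -(mulmxA (y^T *m y)) trace_mx11 mxE big_ord1 sqnormE -expr2.
by rewrite sqrtr_sqr ger0_norm // sumr_ge0 // => i _; apply: sqr_ge0.
Qed.

End Quadratic.

Lemma big_mulmxr_subgroup (R : rcfType) d (G : seq 'M[R]_d) (T : Type) (idx : T)
    (op : Monoid.com_law idx) (g : 'M[R]_d -> T) V :
  finite_subgroup_O G -> V \in G ->
  \big[op/idx]_(U <- G) g (U *m V) = \big[op/idx]_(U <- G) g U.
Proof.
case=> uniqG _ mulG invG orthoG VG.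
have unitV : V \in unitmx by case: (mulmx1_unit (orthoG V VG)).
rewrite -(big_map (mulmx^~ V) xpredT g); apply: perm_big; apply: uniq_perm => //.
  by rewrite map_inj_uniq // => A B /(congr1 (mulmx^~ (invmx V))); rewrite !mulmxK.
move=> W; apply/mapP/idP => [[U UG ->]|WG]; first exact: mulG.
by exists (W *m invmx V); rewrite ?mulmxKV // mulG ?invG.
Qed.

Section GroupAverage.
Variables (R : rcfType) (d : nat) (G : seq 'M[R]_d) (p : nat).
Hypothesis subG : finite_subgroup_O G.
Local Notation MP := {mpoly R[d]}.

Definition avg_qform (M : 'M[R]_d) : MP :=
  (size G)%:R^-1 *: \sum_(U <- G) qform (U^T *m M *m U) ^+ p.

Lemma peval_avg_qform M x : peval (avg_qform M) x =
  (size G)%:R^-1 * \sum_(U <- G) ((U *m x)^T *m M *m (U *m x)) 0 0 ^+ p.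
Proof.
rewrite /peval mevalZ rmorph_sum; congr (_ * _); apply: eq_bigr => U _.
by rewrite rmorphXn /= -/(peval _ x) peval_qform !trmx_mul !mulmxA.
Qed.

Lemma avg_qform_homog M : avg_qform M \is (2 * p).-homog.
Proof. by rewrite rpredZ // rpred_sum // => U _; rewrite dhomogMn ?qform_homog. Qed.

Lemma avg_qform_invariant M V x : V \in G ->
  peval (avg_qform M) (V *m x) = peval (avg_qform M) x.
Proof.
move=> VG; rewrite !peval_avg_qform; congr (_ * _).
rewrite -(big_mulmxr_subgroup _ (fun U => ((U *m x)^T *m M *m (U *m x)) 0 0 ^+ p) subG VG).
by apply: eq_bigr => U _; rewrite !mulmxA.
Qed.

Lemma iter_mlaplacian_avg_qform M : M^T = M ->
  iter_mlaplacian p (avg_qform M) = (lap_const p (fun k => \tr (M ^+ k)) (nseq p 1%N))%:A.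
Proof.
move=> symM; have [_ G1 _ _ orthoG] := subG.
have sizeG : (size G)%:R != 0 :> R by rewrite pnatr_eq0; apply: contraTneq G1 => /size0nil ->.
rewrite linearZZ linear_sum big_seq.
under eq_bigr => U UG.
  rewrite /= iter_mlaplacian_qformX; last by rewrite !trmx_mul trmxK symM mulmxA.
  rewrite (eq_lap_const _ _ (fun k => mxtrace_orthogonal_conjX M k (orthoG U UG))).
over.
rewrite -big_seq big_const_seq count_predT iter_addr addr0.
by rewrite -scaler_nat scalerA mulVf // scale1r.
Qed.

End GroupAverage.

Section SpectralPolynomial.
Variables (R : fieldType) (d p : nat).

(* The paper's F_p: Delta^p (x^T M x)^p / Delta^p |x|^(2p) as a function of the
   power sums of the eigenvalues of M. *)
Definition Fpoly : {mpoly R[d]} :=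
  (lap_const p (fun=> d%:R : R) (nseq p 1%N))^-1 *: lap_const p (power_sum R d) (nseq p 1%N).

Lemma Fpoly_homog : Fpoly \is p.-homog.
Proof.
rewrite rpredZ //; have := lap_const_homog p (nseq p 1%N) (@power_sum_homog R d).
by rewrite sumn_nseq mul1n.
Qed.

Lemma Fpoly_sym : Fpoly \is symmetric.
Proof. by rewrite rpredZ // lap_const_closed // => k; apply: power_sum_sym. Qed.

End SpectralPolynomial.

Lemma Fpoly_eigen (R : rcfType) d p (M : 'M[R]_d) (s : 'I_d -> R) :
  eigen_multiset M s -> (Fpoly R d p).@[s] =
  (lap_const p (fun=> d%:R : R) (nseq p 1%N))^-1 *
    lap_const p (fun k => \tr (M ^+ k)) (nseq p 1%N).
Proof.
move=> eigM; rewrite mevalZ rmorph_lap_const; congr (_ * _); apply: eq_lap_const => k /=.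
rewrite (mxtraceX_real_char_roots k eigM) rmorph_sum.
by apply: eq_bigr => i _; rewrite rmorphXn /= mevalXU.
Qed.

Lemma avg_qform_coef (R : rcfType) d (G : seq 'M[R]_d) p M (s : 'I_d -> R) (c : R) :
  finite_subgroup_O G -> (0 < d)%N -> M^T = M -> eigen_multiset M s ->
  avg_qform G p M = c *: sqnorm_poly R d ^+ p -> (Fpoly R d p).@[s] = c.
Proof.
move=> subG d_gt0 symM eigM /(congr1 (iter_mlaplacian p)); rewrite (Fpoly_eigen p eigM).
rewrite iter_mlaplacian_avg_qform // linearZZ /= sqnorm_poly_qform.
rewrite iter_mlaplacian_qformX ?trmx1 // scalerA.
have trX1 k : \tr ((1%:M : 'M[R]_d) ^+ k) = d%:R by rewrite expr1n mxtrace1.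
rewrite (eq_lap_const _ _ trX1).
move=> /(congr1 (meval (fun=> 0))); rewrite !mevalZ meval1 !mulr1.
set k0 := lap_const p (fun=> d%:R) _.
have k0_gt0 : 0 < k0 by apply: lap_const_gt0 => [a|]; rewrite ?size_nseq ?ltr0n.
by move=> ->; rewrite mulrC mulfK ?gt_eqF.
Qed.

Theorem theorem3p2 (R : rcfType) (d : nat) (G : seq 'M[R]_d) (p : nat) :
  finite_subgroup_O G -> (1 <= p)%N ->
  (forall q : {mpoly R[d]}, q \is (2 * p)%N.-homog ->
     (forall U x, U \in G -> peval q (U *m x) = peval q x) ->
     exists c : R, q = c *: sqnorm_poly R d ^+ p) ->
  exists F : {mpoly R[d]},
    [/\ F \is p.-homog, F \is symmetric &
      forall (M : 'M[R]_d) (s : 'I_d -> R) (y : 'cV[R]_d),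
        M^T = M -> eigen_multiset M s ->
        (size G)%:R^-1 * \sum_(U <- G) hs_inner M (Pproj (U *m y)) ^+ p
          = F.@[s] * hs_norm (Pproj y) ^+ p
        /\ F.@[s] * hs_norm (Pproj y) ^+ p = F.@[s] * sqnorm y ^+ p].
Proof.
move=> subG p_gt0 invG; exists (Fpoly R d p); split; [exact: Fpoly_homog|exact: Fpoly_sym|].
move=> M s y symM eigM; rewrite hs_norm_Pproj; split => //.
have [c avgE] := invG _ (avg_qform_homog G p M) (fun U x => avg_qform_invariant p subG M x).
have -> : (size G)%:R^-1 * \sum_(U <- G) hs_inner M (Pproj (U *m y)) ^+ p = c * sqnorm y ^+ p.
  rewrite -(peval_sqnorm_poly y) /peval -rmorphXn -mevalZ -/(peval _ y) -avgE peval_avg_qform.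
  by congr (_ * _); apply: eq_bigr => U _; rewrite hs_inner_Pproj.
have [d0|d_gt0] := posnP d; last by rewrite (avg_qform_coef subG d_gt0 symM eigM avgE).
by subst d; rewrite /sqnorm big_ord0 expr0n eqn0Ngt p_gt0 !mulr0.
Qed.
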